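(* Let $n\ge 2$ and let $P=(P_1,\dots,P_t)$ be a partition of $\{1,\dots,n+1\}$. Let $\Delta_i$ be a simplex of dimension $|P_i|$ for $i=1,\dots,t$, so that $\Delta_1\times\dots\times\Delta_t$ is an $(n+1)$-dimensional convex polytope. Then ${\cal K}(P)$ is isomorphic to the boundary complex of the polar (dual) polytope of $\Delta_1\times\dots\times\Delta_t$.
   Context: For a partition $P=(P_1,\dots,P_t)$ of $\{1,\dots,n+1\}$, ${\cal K}(P)$ is the simplicial complex on the vertex set $\{1,\dots,n+1\}\cup\{p_1,\dots,p_t\}$ ($t$ new vertices) whose $n$-faces are the sets $\{y_1,\dots,y_{n+1}\}$ with, for each $i$, $y_i=i$ or $y_i=p_j$ where $i\in P_j$, subject to the $y_i$ being pairwise distinct; its faces are all nonempty subsets of these. The boundary complex of a simplicial polytope is the abstract simplicial complex whose faces are the vertex sets of its proper faces; isomorphism means a vertex bijection mapping faces exactly onto faces. *)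

From mathcomp Require Import all_boot all_order all_algebra.
From mathcomp Require Import reals.
Set Implicit Arguments. Unset Strict Implicit. Unset Printing Implicit Defensive.
Import Order.TTheory GRing.Theory Num.Theory.
Local Open Scope ring_scope.

Definition dotp {R : numDomainType} {m : nat} (a x : 'I_m -> R) : R :=
  \sum_i a i * x i.

(* A partition (P_1,...,P_t) of {1,...,m} (here indexed by 'I_m) is given by
   the map p sending an element to the index of its block; blocks nonempty. *)
Definition block {m t : nat} (p : 'I_m -> 'I_t) (j : 'I_t) : {set 'I_m} :=
  [set i | p i == j].

Definition is_partition {m t : nat} (p : 'I_m -> 'I_t) : Prop :=
  forall j : 'I_t, exists i : 'I_m, p i = j.

(* vertex set: inl i  = element i of {1..m},  inr j = new vertex p_j *)
Definition K_facet {m t : nat} (p : 'I_m -> 'I_t) (y : 'I_m -> 'I_m + 'I_t) : Prop :=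
  (forall i, y i = inl i \/ y i = inr (p i)) /\ injective y.

Definition K_face {m t : nat} (p : 'I_m -> 'I_t) (s : {set 'I_m + 'I_t}) : Prop :=
  s != set0 /\
  exists y, K_facet p y /\ forall v, v \in s -> exists i, y i = v.

Definition aff_indep {R : numDomainType} {m k : nat} (A : {set 'I_m})
  (v : 'I_k -> 'I_m -> R) : Prop :=
  forall mu : 'I_k -> R, \sum_l mu l = 0 ->
    (forall i, i \in A -> \sum_l mu l * v l i = 0) -> forall l, mu l = 0.

(* Delta_j is the simplex in R^{P_j} (coordinates of block j) spanned by
   the #|P_j|+1 points V j; the product Delta_1 x ... x Delta_t lives in
   R^{P_1} x ... x R^{P_t} = R^m. *)
Definition prod_simplices {R : numDomainType} {m t : nat} (p : 'I_m -> 'I_t)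
  (V : forall j : 'I_t, 'I_(#|block p j|).+1 -> 'I_m -> R) (x : 'I_m -> R) : Prop :=
  forall j : 'I_t, exists lam : 'I_(#|block p j|).+1 -> R,
    (forall l, 0 <= lam l) /\ \sum_l lam l = 1 /\
    forall i, i \in block p j -> x i = \sum_l lam l * V j l i.

Definition in_interior {R : numDomainType} {m : nat} (S : ('I_m -> R) -> Prop)
  (c : 'I_m -> R) : Prop :=
  exists e : R, 0 < e /\ forall x, (forall i, `|x i - c i| < e) -> S x.

Definition polar {R : numDomainType} {m : nat} (S : ('I_m -> R) -> Prop)
  (c : 'I_m -> R) (y : 'I_m -> R) : Prop :=
  forall x, S x -> dotp y (fun i => x i - c i) <= 1.

Definition face {R : numDomainType} {m : nat} (S F : ('I_m -> R) -> Prop) : Prop :=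
  (exists x, F x) /\
  exists (a : 'I_m -> R) (b : R), (forall x, S x -> dotp a x <= b) /\
    forall x, F x <-> (S x /\ dotp a x = b).

Definition proper_face {R : numDomainType} {m : nat} (S F : ('I_m -> R) -> Prop) : Prop :=
  face S F /\ exists x, S x /\ ~ F x.

Definition is_vertex {R : numDomainType} {m : nat} (S : ('I_m -> R) -> Prop)
  (v : 'I_m -> R) : Prop :=
  face S (fun x => x = v).

Definition iso_boundary_complex {R : numDomainType} {m : nat} {T : finType}
  (K : {set T} -> Prop) (S : ('I_m -> R) -> Prop) : Prop :=
  exists f : T -> ('I_m -> R),
    injective f /\
    (forall v, is_vertex S v <-> exists u, f u = v) /\
    forall s : {set T}, K s <->
      exists F, proper_face S F /\ forall u, u \in s <-> F (f u).

Arguments prod_simplices {R m t} p V x.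
Arguments block {m t} p j.
Arguments K_face {m t} p s.

(* The product [Q] of the simplices is the polytope on which the barycentric
   coordinates of all factors are nonnegative.  These coordinates are indexed
   by the vertices of K(P): in the simplex on the block [P_j], one vertex is
   labelled [p_j] and the others by the elements of [P_j].  So [Q] has one
   facet per vertex [u] of K(P), and the polar has one vertex per facet, the
   suitably normalised facet normal.  The faces of the polar are dual to those
   of [Q]: a set [s] of polar vertices spans a proper face iff the facets of
   [Q] labelled by [s] meet, i.e. iff some point of [Q] has all barycentric
   coordinates in [s] equal to zero, i.e. iff [s] omits some vertex of every
   simplex.  This is exactly the condition for [s] to lie in a facet of K(P),
   which in every block [P_j] keeps either [p_j] or one element it replaces. *)

From mathcomp Require Import all_boot all_order all_algebra.
From mathcomp Require Import reals.
From mathcomp Require Import ring lra.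
From Stdlib Require Import FunctionalExtensionality.
Set Implicit Arguments. Unset Strict Implicit. Unset Printing Implicit Defensive.
Import Order.TTheory GRing.Theory Num.Theory.
Local Open Scope ring_scope.

Definition dotp_on {R : numDomainType} {m : nat} (A : {set 'I_m}) (a x : 'I_m -> R) : R :=
  \sum_(i in A) a i * x i.

Section DotProduct.
Variables (R : numDomainType) (m : nat).
Implicit Types (a x : 'I_m -> R).

Lemma dotpC a x : dotp a x = dotp x a.
Proof. by apply: eq_bigr => i _; rewrite mulrC. Qed.

Lemma dotp0l x : dotp (fun=> 0) x = 0.
Proof. by rewrite /dotp big1 // => i _; rewrite mul0r. Qed.

Lemma dotp_delta (i : 'I_m) (e : R) x :
  dotp (fun i' => if i' == i then e else 0) x = e * x i.
Proof.
rewrite /dotp (bigD1 i) //= eqxx big1 ?addr0 // => i' /negbTE ->.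
by rewrite mul0r.
Qed.

Lemma dotpBl a b x : dotp (fun i => a i - b i) x = dotp a x - dotp b x.
Proof. by rewrite /dotp -sumrB; apply: eq_bigr => i _; rewrite mulrBl. Qed.

Lemma dotp_onBl (A : {set 'I_m}) a b x :
  dotp_on A (fun i => a i - b i) x = dotp_on A a x - dotp_on A b x.
Proof. by rewrite /dotp_on -sumrB; apply: eq_bigr => i _; rewrite mulrBl. Qed.

Lemma dotp_partition (t : nat) (p : 'I_m -> 'I_t) a x :
  dotp a x = \sum_j dotp_on (block p j) a x.
Proof.
rewrite /dotp (partition_big p xpredT) //=; apply: eq_bigr => j _.
by apply: eq_bigl => i; rewrite inE.
Qed.

Lemma dotp_update_on (A : {set 'I_m}) a x z (c : 'I_m -> R) :
  dotp a (fun i => (if i \in A then z i else x i) - c i) =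
  dotp a (fun i => x i - c i) + dotp_on A a (fun i => z i - x i).
Proof.
rewrite /dotp /dotp_on [X in _ + X]big_mkcond -big_split /=.
by apply: eq_bigr => i _; case: (i \in A); [ring | rewrite addr0].
Qed.

End DotProduct.

Section Barycentric.
Variables (R : numFieldType) (m : nat) (A : {set 'I_m}).
Variable V : 'I_#|A|.+1 -> 'I_m -> R.
Hypothesis V_indep : aff_indep A V.
Implicit Types (x y z d : 'I_m -> R).

Local Notation k := #|A|.
Local Notation elt := (@enum_val _ (mem A)).

(* [hom_row x] lists [1] followed by the coordinates of [x] in [A]; the rows
   of [vertex_mx] are those of the vertices, which are linearly independent,
   and [bary x] solves [bary x *m vertex_mx = hom_row x]. *)
Definition hom_row x : 'rV[R]_k.+1 :=
  \row_r (if unlift ord0 r is Some r' then x (elt r') else 1).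

Definition vertex_mx : 'M[R]_k.+1 := \matrix_l hom_row (V l).

Definition bary x (l : 'I_k.+1) : R := (hom_row x *m invmx vertex_mx) 0 l.

Definition bary_grad (l : 'I_k.+1) (i : 'I_m) : R :=
  \sum_(r | elt r == i) invmx vertex_mx (lift ord0 r) l.

Lemma vertex_mxE l r :
  vertex_mx l r = if unlift ord0 r is Some r' then V l (elt r') else 1.
Proof. by rewrite !mxE. Qed.

Lemma vertex_mx_unit : vertex_mx \in unitmx.
Proof.
rewrite unitmxE unitfE; apply/negP => /det0P [v /negP v_neq0 /matrixP vA].
apply: v_neq0; apply/eqP/matrixP => i l; rewrite ord1 mxE.
apply: (V_indep (mu := fun l => v 0 l)) => [|i' Ai'].
- have := vA 0 ord0; rewrite !mxE => E; rewrite -[RHS]E.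
  by apply: eq_bigr => l' _; rewrite vertex_mxE unlift_none mulr1.
- have := vA 0 (lift ord0 (enum_rank_in Ai' i')); rewrite !mxE => E.
  by rewrite -[RHS]E; apply: eq_bigr => l' _; rewrite vertex_mxE liftK enum_rankK_in.
Qed.

Lemma bary_hom_row x r : \sum_l bary x l * vertex_mx l r = hom_row x 0 r.
Proof.
have /matrixP/(_ 0 r) := mulmxKV vertex_mx_unit (hom_row x).
by rewrite [in X in X = _]mxE.
Qed.

Lemma bary_sum1 x : \sum_l bary x l = 1.
Proof.
have := bary_hom_row x ord0; rewrite mxE unlift_none => E; rewrite -[RHS]E.
by apply: eq_bigr => l _; rewrite vertex_mxE unlift_none mulr1.
Qed.

Lemma bary_comb x i : i \in A -> \sum_l bary x l * V l i = x i.
Proof.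
move=> Ai; have := bary_hom_row x (lift ord0 (enum_rank_in Ai i)).
rewrite mxE liftK enum_rankK_in // => E; rewrite -[RHS]E.
by apply: eq_bigr => l _; rewrite vertex_mxE liftK enum_rankK_in.
Qed.

Lemma bary_grad_out l i : i \notin A -> bary_grad l i = 0.
Proof.
move=> Ai; rewrite /bary_grad big_pred0 // => r.
by apply: contraNF Ai => /eqP <-; apply: enum_valP.
Qed.

Lemma baryE x l : bary x l = invmx vertex_mx ord0 l + dotp (bary_grad l) x.
Proof.
rewrite /bary mxE big_ord_recl mxE unlift_none mul1r; congr (_ + _).
rewrite (partition_big elt xpredT) //=; apply: eq_bigr => i _.
by rewrite mulr_suml; apply: eq_bigr => r /eqP <-; rewrite mxE liftK mulrC.
Qed.

Lemma baryB x y l : bary x l - bary y l = dotp (bary_grad l) (fun i => x i - y i).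
Proof.
rewrite !baryE opprD addrACA subrr add0r /dotp -sumrB.
by apply: eq_bigr => i _; rewrite mulrBr.
Qed.

Lemma bary_eq_on x y : (forall i, i \in A -> x i = y i) -> forall l, bary x l = bary y l.
Proof.
move=> xy l; apply/eqP; rewrite -subr_eq0 baryB /dotp big1 // => i _.
case: (boolP (i \in A)) => Ai; last by rewrite bary_grad_out ?mul0r.
by rewrite xy // subrr mulr0.
Qed.

Lemma bary_lerp x z s l :
  bary (fun i => x i + s * (z i - x i)) l = bary x l + s * (bary z l - bary x l).
Proof.
rewrite -[LHS](subrK (bary x l)) (baryB z x l) (baryB _ x l) addrC; congr (_ + _).
by rewrite /dotp mulr_sumr; apply: eq_bigr => i _; ring.
Qed.

Lemma bary_uniq x (mu : 'I_k.+1 -> R) : \sum_l mu l = 1 ->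
  (forall i, i \in A -> \sum_l mu l * V l i = x i) -> forall l, mu l = bary x l.
Proof.
move=> mu1 mu_x l; apply/eqP; rewrite -subr_eq0; apply/eqP; move: l.
apply: (V_indep (mu := fun l => mu l - bary x l)) => [|i Ai].
  by rewrite sumrB mu1 bary_sum1 subrr.
by under eq_bigr do rewrite mulrBl; rewrite sumrB mu_x // bary_comb // subrr.
Qed.

Lemma bary_vertex l' l : bary (V l') l = (l == l')%:R.
Proof.
symmetry; apply: (bary_uniq (mu := fun l => (l == l')%:R)) => [|i _].
  by rewrite (bigD1 l') //= eqxx big1 ?addr0 // => l0 /negbTE ->.
rewrite (bigD1 l') //= eqxx mul1r big1 ?addr0 // => l0 /negbTE ->.
by rewrite mul0r.
Qed.

Lemma bary_le1 x l : (forall l, 0 <= bary x l) -> bary x l <= 1.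
Proof.
move=> x_ge0; rewrite -(bary_sum1 x) (bigD1 l) //= lerDl.
by apply: sumr_ge0 => l' _.
Qed.

Lemma dotp_on_bary d x z : dotp_on A d (fun i => z i - x i) =
  \sum_l bary z l * dotp_on A d (fun i => V l i - x i).
Proof.
rewrite /dotp_on; under [RHS]eq_bigr do rewrite mulr_sumr.
rewrite exchange_big; apply: eq_bigr => i Ai.
transitivity (d i * (\sum_l bary z l * V l i - (\sum_l bary z l) * x i)).
  by rewrite bary_comb // bary_sum1 mul1r.
by rewrite mulr_suml -sumrB mulr_sumr; apply: eq_bigr => l _; ring.
Qed.

Lemma dotp_on_vertices_eq0 d x :
  (forall l, dotp_on A d (fun i => V l i - x i) = 0) -> forall i, i \in A -> d i = 0.
Proof.
move=> d_perp i Ai; have := dotp_on_bary d x (fun i' => x i' + (i' == i)%:R).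
rewrite big1 => [|l _]; last by rewrite d_perp mulr0.
rewrite /dotp_on (bigD1 i) //= big1 ?addr0 => [|i' /andP [_ /negbTE ->]].
  by rewrite addrAC subrr add0r eqxx mulr1.
by rewrite addrAC subrr add0r mulr0.
Qed.

Lemma dotp_on_vertex_eq0 d x z l0 : bary z l0 != 0 ->
  dotp_on A d (fun i => z i - x i) = 0 ->
  (forall l, l != l0 -> dotp_on A d (fun i => V l i - x i) = 0) ->
  dotp_on A d (fun i => V l0 i - x i) = 0.
Proof.
move=> z_l0 d_z d_V; move: d_z; rewrite dotp_on_bary (bigD1 l0) //= big1 ?addr0.
  by move/eqP; rewrite mulf_eq0 (negbTE z_l0) => /eqP.
by move=> l /d_V ->; rewrite mulr0.
Qed.

End Barycentric.

Section ProductOfSimplices.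
(* Otherwise [j] would become an implicit argument of [V]. *)
Unset Implicit Arguments.
Variables (R : realFieldType) (n t : nat) (p : 'I_n.+1 -> 'I_t).
Variable V : forall j : 'I_t, 'I_#|block p j|.+1 -> 'I_n.+1 -> R.
Hypothesis V_indep : forall j, aff_indep (block p j) (V j).
Implicit Types (x y z : 'I_n.+1 -> R).

Local Notation dim j := #|block p j|.
Local Notation coord j := (bary (V j)).
Local Notation Q := (prod_simplices p V).

Definition label := ('I_n.+1 + 'I_t)%type.

(* Vertex [0] of the [j]-th simplex is labelled by the new vertex [p_j] of
   K(P), vertex [l.+1] by the [l]-th element of [P_j].  The barycentric
   coordinate [fcoord u] of the vertex labelled [u] vanishes exactly on the
   facet of [Q] labelled [u]. *)
Definition lab j (l : 'I_(dim j).+1) : label :=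
  if l == 0 :> nat then inr j else inl (nth ord0 (enum (block p j)) l.-1).

Definition lab_block (u : label) : 'I_t :=
  match u with inl i => p i | inr j => j end.

Definition lab_index (u : label) : nat :=
  match u with inl i => (index i (enum (block p (p i)))).+1 | inr _ => 0 end.

Definition fcoord (u : label) x : R := coord (lab_block u) x (inord (lab_index u)).

Lemma lab_index_lt u : (lab_index u < (dim (lab_block u)).+1)%N.
Proof. by case: u => [i|j] //=; rewrite ltnS cardE index_mem mem_enum inE. Qed.

Lemma lab_pred_lt j (l : 'I_(dim j).+1) :
  l != 0 :> nat -> (l.-1 < size (enum (block p j)))%N.
Proof. by rewrite -cardE; case: l => [[|l']]. Qed.

Lemma lab_pred_block j (l : 'I_(dim j).+1) :
  l != 0 :> nat -> p (nth ord0 (enum (block p j)) l.-1) = j.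
Proof. by move/lab_pred_lt/(mem_nth ord0); rewrite mem_enum inE => /eqP. Qed.

Lemma lab_block_lab j l : lab_block (lab j l) = j.
Proof. by rewrite /lab; case: eqP => //= /eqP /lab_pred_block. Qed.

Lemma fcoord_lab j l x : fcoord (lab j l) x = coord j x l.
Proof.
rewrite /lab; case: eqP => [l0|/eqP l_neq0].
  by rewrite /fcoord /=; congr bary; apply: val_inj; rewrite /= inordK // l0.
rewrite /fcoord /= lab_pred_block // index_uniq ?enum_uniq ?lab_pred_lt //.
by congr bary; apply: val_inj; rewrite /= prednK ?lt0n // inordK.
Qed.

Lemma lab_indexK u : lab (lab_block u) (inord (lab_index u)) = u.
Proof.
have := lab_index_lt u; case: u => [i|j] /= lt; rewrite /lab inordK //=.
by rewrite nth_index // mem_enum inE.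
Qed.

Lemma lab_inj j : injective (lab j).
Proof.
move=> l1 l2; rewrite /lab; case: eqP => l1_0; case: eqP => l2_0 //.
  by move=> _; apply: val_inj; rewrite /= l1_0 l2_0.
move=> [] /eqP; rewrite nth_uniq ?enum_uniq ?lab_pred_lt; try exact/eqP.
move=> /eqP E; apply: val_inj => /=.
by rewrite -[LHS]prednK ?lt0n ?E ?prednK ?lt0n; apply/eqP.
Qed.

Lemma prod_simplicesE x : Q x <-> forall u, 0 <= fcoord u x.
Proof.
split=> [Qx u | x_ge0 j].
  have [mu [mu_ge0 [mu1 mu_x]]] := Qx (lab_block u).
  by rewrite /fcoord -(bary_uniq (V_indep _) mu1 (fun i Ai => esym (mu_x i Ai))).
exists (coord j x); split; last split.
- by move=> l; rewrite -fcoord_lab.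
- exact: (bary_sum1 (V_indep j)).
- by move=> i Ai; rewrite (bary_comb (V_indep j)).
Qed.

Lemma fcoord_le1 u x : Q x -> fcoord u x <= 1.
Proof.
move=> /prod_simplicesE x_ge0; apply: (bary_le1 (V_indep _)) => l.
by rewrite -fcoord_lab.
Qed.

Section FacePoint.
Variable s : {set label}.
Hypothesis s_avoids : forall j, exists l, lab j l \notin s.

Definition face_count j := #|[pred l : 'I_(dim j).+1 | lab j l \notin s]|.

Definition face_weight j (l : 'I_(dim j).+1) : R :=
  if lab j l \in s then 0 else (face_count j)%:R^-1.

Definition face_point i : R := \sum_l face_weight (p i) l * V (p i) l i.

Lemma face_count_gt0 j : (0 < face_count j)%N.
Proof. by have [l l_notin] := s_avoids j; apply/card_gt0P; exists l. Qed.

Lemma face_count_le j : (face_count j <= n.+2)%N.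
Proof.
apply: (leq_trans (max_card _)); rewrite card_ord ltnS.
by have := max_card (mem (block p j)); rewrite card_ord.
Qed.

Lemma coord_face_point j l : coord j face_point l = face_weight j l.
Proof.
symmetry; move: l; apply: (bary_uniq (V_indep j)) => [|i]; last first.
  by rewrite inE => /eqP <-.
transitivity (\sum_(l in [pred l : 'I_(dim j).+1 | lab j l \notin s])
                (face_count j)%:R^-1 : R).
  rewrite [RHS]big_mkcond; apply: eq_bigr => l _.
  by rewrite /face_weight inE; case: (lab j l \in s).
rewrite sumr_const -/(face_count j) -[_ *+ _]mulr_natr mulVf //.
by rewrite pnatr_eq0 -lt0n face_count_gt0.
Qed.

Lemma fcoord_face_point u :
  fcoord u face_point = if u \in s then 0 else (face_count (lab_block u))%:R^-1.
Proof. by rewrite /fcoord coord_face_point /face_weight lab_indexK. Qed.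

Lemma face_point_in : Q face_point.
Proof.
apply/prod_simplicesE => u; rewrite fcoord_face_point.
by case: ifP => // _; rewrite invr_ge0.
Qed.

Lemma fcoord_face_point_eq0 u : fcoord u face_point = 0 <-> u \in s.
Proof.
rewrite fcoord_face_point; case: ifP => // _; split=> // /eqP.
by rewrite invr_eq0 pnatr_eq0 (negbTE (lt0n_neq0 (face_count_gt0 _))).
Qed.

Lemma fcoord_face_point_ge u : u \notin s -> (n.+2)%:R^-1 <= fcoord u face_point.
Proof.
move=> u_notin; rewrite fcoord_face_point (negbTE u_notin).
by rewrite lef_pV2 ?posrE ?ltr0n ?face_count_gt0 // ler_nat face_count_le.
Qed.

End FacePoint.

Variable c : 'I_n.+1 -> R.
Hypothesis c_interior : in_interior Q c.
Local Notation polarQ := (polar Q c).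

Lemma center_in : Q c.
Proof. by have [e [e_gt0 near_c]] := c_interior; apply: near_c => i; rewrite subrr normr0. Qed.

(* If a coordinate of [c] vanished, moving [c] slightly away from the
   corresponding vertex would leave [Q]. *)
Lemma fcoord_center_gt0 u : 0 < fcoord u c.
Proof.
have [e [e_gt0 near_c]] := c_interior.
have cu_ge0 := (prod_simplicesE c).1 center_in u.
rewrite lt_def cu_ge0 andbT; apply/eqP => cu0.
set j := lab_block u; set l : 'I_(dim j).+1 := inord (lab_index u).
set S : R := \sum_i `|V j l i - c i|.
have S_ge0 : 0 <= S by apply: sumr_ge0.
set s := e / (1 + S).
have s_gt0 : 0 < s by rewrite divr_gt0 // ltr_pwDl.
have sS : s + s * S = e by rewrite -[s in s + _]mulr1 -mulrDr divfK // gt_eqF // ltr_pwDl.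
have : Q (fun i => c i + (- s) * (V j l i - c i)).
  apply: near_c => i; rewrite addrAC subrr add0r normrM normrN (gtr0_norm s_gt0).
  have : `|V j l i - c i| <= S by rewrite /S (bigD1 i) //= lerDl sumr_ge0.
  by move/(ler_wpM2l (ltW s_gt0)); lra.
move/prod_simplicesE/(_ u); rewrite /fcoord -/j -/l bary_lerp.
rewrite (bary_vertex (V_indep j)) eqxx -/(fcoord u c) cu0 mulr1n; lra.
Qed.

Definition polar_vertex u (i : 'I_n.+1) : R :=
  - bary_grad (V (lab_block u)) (inord (lab_index u)) i / fcoord u c.

Lemma dotp_polar_vertex u x :
  dotp (polar_vertex u) (fun i => x i - c i) = 1 - fcoord u x / fcoord u c.
Proof.
have cu_neq0 : fcoord u c != 0 by rewrite gt_eqF ?fcoord_center_gt0.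
transitivity (- (fcoord u x - fcoord u c) / fcoord u c); last by field.
rewrite {1 2}/fcoord baryB /dotp -sumrN mulr_suml.
by apply: eq_bigr => i _; rewrite /polar_vertex !mulNr mulrAC.
Qed.

Lemma polar_vertex_in u : polarQ (polar_vertex u).
Proof.
move=> x Qx; rewrite dotp_polar_vertex lerBlDr lerDl divr_ge0 //.
  exact: (prod_simplicesE x).1.
by rewrite ltW // fcoord_center_gt0.
Qed.

Lemma dotp_polar_vertex_eq1 u x :
  dotp (polar_vertex u) (fun i => x i - c i) = 1 <-> fcoord u x = 0.
Proof.
have cu_gt0 := fcoord_center_gt0 u; rewrite dotp_polar_vertex.
split=> [|->]; last by rewrite mul0r subr0.
move=> /eqP; rewrite subr_eq addrC -subr_eq subrr eq_sym mulf_eq0 invr_eq0.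
by rewrite (gt_eqF cu_gt0) orbF => /eqP.
Qed.

Lemma prod_simplices_of_polar x :
  (forall u, dotp (polar_vertex u) (fun i => x i - c i) <= 1) -> Q x.
Proof.
move=> x_le1; apply/prod_simplicesE => u; have := x_le1 u.
by rewrite dotp_polar_vertex lerBlDr lerDl pmulr_lge0 // invr_gt0 fcoord_center_gt0.
Qed.

Lemma polar0 : polarQ (fun=> 0).
Proof. by move=> x _; rewrite dotp0l. Qed.

Lemma prod_simplices_bounded i x :
  Q x -> `|x i - c i| <= `|c i| + \sum_l `|V (p i) l i|.
Proof.
move=> Qx; have Ai : i \in block p (p i) by rewrite inE.
rewrite -(bary_comb (V_indep _) x Ai) [`|c i| + _]addrC.
apply: (le_trans (ler_normB _ _)); rewrite lerD2r.
apply: (le_trans (ler_norm_sum _ _ _)); apply: ler_sum => l _.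
have := (prod_simplicesE x).1 Qx (lab (p i) l); rewrite fcoord_lab => x_ge0.
have := fcoord_le1 (lab (p i) l) _ Qx; rewrite fcoord_lab => x_le1.
by rewrite normrM ger0_norm // ler_piMl.
Qed.

Lemma polar_axis i : exists2 e : R, 0 < e &
  polarQ (fun i' => if i' == i then e else 0) /\
  polarQ (fun i' => if i' == i then - e else 0).
Proof.
set M := `|c i| + \sum_l `|V (p i) l i|.
have M_ge0 : 0 <= M by rewrite addr_ge0 // sumr_ge0.
have eM : forall x, Q x -> (1 + M)^-1 * `|x i - c i| <= 1.
  move=> x Qx; rewrite ler_pdivrMl ?ltr_pwDl // mulr1.
  by apply: (le_trans (prod_simplices_bounded i _ Qx)); rewrite lerDr.
exists (1 + M)^-1; first by rewrite invr_gt0 ltr_pwDl.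
have e_ge0 : 0 <= (1 + M)^-1 by rewrite invr_ge0 addr_ge0.
split=> x Qx; rewrite dotp_delta; apply: le_trans (eM x Qx).
  by rewrite ler_wpM2l // ler_norm.
by rewrite mulNr -mulrN ler_wpM2l // -normrN ler_norm.
Qed.

(* A supporting hyperplane [<a, y> = b] of the polar has [b != 0] because the
   polar contains points on both sides of [0] on every coordinate axis. *)
Lemma polar_face_support F : proper_face polarQ F ->
  exists2 x, Q x & forall y, F y <-> polarQ y /\ dotp y (fun i => x i - c i) = 1.
Proof.
move=> [[_ [a [b [a_le_b FE]]]] [y0 [polar_y0 Fy0N]]].
have b_neq0 : b != 0.
  apply/eqP => b0; apply: Fy0N; apply/FE; split=> //.
  suff a0 : forall i, a i = 0 by rewrite b0 /dotp big1 // => i _; rewrite a0 mul0r.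
  move=> i; have [e e_gt0 [polar_e polar_Ne]] := polar_axis i.
  have := a_le_b _ polar_e; have := a_le_b _ polar_Ne.
  rewrite !(dotpC a) !dotp_delta b0 mulNr oppr_le0 => ae_ge0 ae_le0.
  apply/eqP; rewrite eq_le -(pmulr_rle0 _ e_gt0) ae_le0.
  by rewrite -(pmulr_rge0 _ e_gt0) ae_ge0.
have b_gt0 : 0 < b.
  by rewrite lt_def b_neq0 -(dotp0l a) dotpC; apply: a_le_b polar0.
have dotp_shift y : dotp y (fun i => (c i + a i / b) - c i) = dotp a y / b.
  rewrite /dotp mulr_suml; apply: eq_bigr => i _.
  by rewrite addrAC subrr add0r mulrA [y i * _]mulrC.
exists (fun i => c i + a i / b).
  apply: prod_simplices_of_polar => u; rewrite dotp_shift ler_pdivrMr // mul1r.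
  exact: a_le_b (polar_vertex_in u).
move=> y; rewrite FE dotp_shift; split=> -[polar_y ay]; split=> //.
  by rewrite ay divff.
by move/(congr1 ( *%R^~ b)): ay; rewrite divfK // mul1r.
Qed.

(* If all coordinates of [x] were positive, [Q] would contain a point beyond
   [x] on the ray from [c], where [y] exceeds [1]. *)
Lemma exists_fcoord_eq0 x y : Q x -> polarQ y ->
  dotp y (fun i => x i - c i) = 1 -> exists u, fcoord u x = 0.
Proof.
move=> Qx polar_y xy1; case: (pickP (fun u => fcoord u x == 0)) => [u /eqP|x_neq0].
  by exists u.
have x_gt0 u : 0 < fcoord u x.
  by rewrite lt_def (prod_simplicesE x).1 // andbT; apply/negbT/x_neq0.
set d := \big[Order.min/1]_u fcoord u x.
have d_gt0 : 0 < d by apply: lt_bigmin.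
have d_le u : d <= fcoord u x by apply: bigmin_le.
have : Q (fun i => x i + (- d) * (c i - x i)).
  apply/prod_simplicesE => u; rewrite /fcoord bary_lerp -!/(fcoord u _).
  have := d_le u; have := fcoord_le1 u _ center_in.
  have := (prod_simplicesE c).1 center_in u; nra.
move/polar_y; rewrite -[X in _ <= X]xy1.
have -> : dotp y (fun i => x i + - d * (c i - x i) - c i) =
    (1 + d) * dotp y (fun i => x i - c i).
  by rewrite /dotp mulr_sumr; apply: eq_bigr => i _; ring.
rewrite xy1; lra.
Qed.

Hypothesis p_onto : is_partition p.

Lemma lab_avoid j u : exists l, lab j l != u.
Proof.
have [i pi_j] := p_onto j.
have dim_gt0 : (0 < dim j)%N by apply/card_gt0P; exists i; rewrite inE pi_j.
case: (eqVneq (lab j ord0) u) => [<-|]; last by exists ord0.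
exists ord_max; apply/eqP => /lab_inj /(congr1 val) /= dim0.
by rewrite dim0 in dim_gt0.
Qed.

Lemma lab_avoid1 u j : exists l, lab j l \notin [set u].
Proof. by have [l l_neq] := lab_avoid j u; exists l; rewrite inE. Qed.

Lemma polar_vertex_inj : injective polar_vertex.
Proof.
move=> u1 u2 eq12.
have /dotp_polar_vertex_eq1 : fcoord u1 (face_point [set u1]) = 0.
  by apply/(fcoord_face_point_eq0 _ (lab_avoid1 u1) _); rewrite inE.
rewrite eq12 => /dotp_polar_vertex_eq1 /(fcoord_face_point_eq0 _ (lab_avoid1 u1) _).
by rewrite inE => /eqP.
Qed.

Section SimpleFacePoint.
Variable u : label.
Let x := face_point [set u].
Let x_in : Q x := face_point_in _ (lab_avoid1 u).

Lemma fcoord_face_point1 u' : fcoord u' x = 0 <-> u' = u.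
Proof. by rewrite (fcoord_face_point_eq0 _ (lab_avoid1 u)) inE; split=> /eqP. Qed.

(* All other coordinates of [x] are at least [1/(n+2)], so [x] can be moved by
   that much towards or away from any vertex not labelled [u]. *)
Lemma face_point1_shift_in j l (sg : R) : lab j l != u -> `|sg| <= (n.+2)%:R^-1 ->
  Q (fun i => if i \in block p j then x i + sg * (V j l i - x i) else x i).
Proof.
move=> l_neq sg_le; set x' := fun i => _.
suff x'_ge0 j' l' : 0 <= coord j' x' l' by apply/prod_simplicesE => u'; apply: x'_ge0.
move: l'; case: (eqVneq j' j) => [->{j'}|j'_neq] l'; last first.
  rewrite (bary_eq_on _ (y := x)); first by rewrite -fcoord_lab (prod_simplicesE x).1.
  by move=> i; rewrite inE => /eqP pi_j'; rewrite /x' inE pi_j' (negbTE j'_neq).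
rewrite (bary_eq_on _ (y := fun i => x i + sg * (V j l i - x i))); last first.
  by move=> i Ai; rewrite /x' Ai.
rewrite bary_lerp (bary_vertex (V_indep j)) -fcoord_lab.
have x_ge0 : 0 <= fcoord (lab j l') x by apply: (prod_simplicesE x).1.
have x_le1 : fcoord (lab j l') x <= 1 by apply: fcoord_le1.
case: (eqVneq (lab j l') u) => [lab_u | lab_neq].
  have -> : (l' == l) = false by apply/eqP => l'_l; move: l_neq; rewrite -l'_l lab_u eqxx.
  by rewrite lab_u (fcoord_face_point1 u).2 // subrr mulr0 addr0.
have x_ge : (n.+2)%:R^-1 <= fcoord (lab j l') x.
  by apply: (fcoord_face_point_ge _ (lab_avoid1 u)); rewrite inE.
have e_le1 : (n.+2)%:R^-1 <= 1 :> R by rewrite invf_le1 ?ler1n ?ltr0n.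
move: sg_le; rewrite ler_norml => /andP [sg_ge sg_le].
move: (fcoord _ x) (n.+2)%:R^-1 x_ge0 x_le1 x_ge e_le1 sg_ge sg_le => f e *.
by case: (l' == l); rewrite /= ?mulr1n ?mulr0n; nra.
Qed.

Lemma polar_face_point1_perp y j l : polarQ y ->
  dotp y (fun i => x i - c i) = 1 -> lab j l != u ->
  dotp_on (block p j) y (fun i => V j l i - x i) = 0.
Proof.
move=> polar_y xy1 l_neq; set D := dotp_on _ _ _.
set s : R := (n.+2)%:R^-1.
have s_gt0 : 0 < s by rewrite invr_gt0 ltr0n.
have sgD_le0 sg : `|sg| <= s -> sg * D <= 0.
  move=> sg_le; have := polar_y _ (face_point1_shift_in _ _ _ l_neq sg_le).
  rewrite dotp_update_on xy1.
  have -> : dotp_on (block p j) y (fun i => x i + sg * (V j l i - x i) - x i) = sg * D.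
    by rewrite /D /dotp_on mulr_sumr; apply: eq_bigr => i _; ring.
  lra.
have := sgD_le0 s; have := sgD_le0 (- s).
rewrite normrN gtr0_norm // lexx; nra.
Qed.

Lemma face_point1_dir_eq0 d :
  (forall j l, lab j l != u -> dotp_on (block p j) d (fun i => V j l i - x i) = 0) ->
  dotp d (fun i => x i - c i) = 0 -> forall i, d i = 0.
Proof.
move=> d_perp d_xc.
have d_out i : p i != lab_block u -> d i = 0.
  move=> pi_neq; apply: (dotp_on_vertices_eq0 (V_indep (p i)) (x := x)); last first.
    by rewrite inE.
  by move=> l; apply: d_perp; apply: contra_neq pi_neq => <-; rewrite lab_block_lab.
set j0 := lab_block u; set l0 : 'I_(dim j0).+1 := inord (lab_index u).
have lab0 : lab j0 l0 = u by apply: lab_indexK.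
have d_perp0 : forall l, dotp_on (block p j0) d (fun i => V j0 l i - x i) = 0.
  move=> l; case: (eqVneq l l0) => [->|l_neq]; last first.
    by apply: d_perp; rewrite -lab0 (inj_eq (@lab_inj j0)).
  apply: (dotp_on_vertex_eq0 (V_indep j0) (z := c)).
  - by rewrite -fcoord_lab lab0 gt_eqF ?fcoord_center_gt0.
  - move: d_xc; rewrite (dotp_partition p) (bigD1 j0) //= big1 ?addr0 => [dxc|j j_neq].
      apply/eqP; rewrite -oppr_eq0 -dxc; apply/eqP.
      by rewrite /dotp_on -sumrN; apply: eq_bigr => i _; ring.
    rewrite /dotp_on big1 // => i; rewrite inE => /eqP pi_j.
    by rewrite d_out ?mul0r // pi_j.
  - by move=> l' l'_neq; apply: d_perp; rewrite -lab0 (inj_eq (@lab_inj j0)).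
move=> i; case: (eqVneq (p i) j0) => [pi_j0|]; last exact: d_out.
by apply: (dotp_on_vertices_eq0 (V_indep j0) d_perp0); rewrite inE pi_j0.
Qed.

Lemma polar_face_point1_eq y : polarQ y ->
  dotp y (fun i => x i - c i) = 1 -> y = polar_vertex u.
Proof.
move=> polar_y xy1.
have xw1 : dotp (polar_vertex u) (fun i => x i - c i) = 1.
  exact/dotp_polar_vertex_eq1/fcoord_face_point1.
apply: functional_extensionality => i; apply/eqP; rewrite -subr_eq0; apply/eqP.
move: i; apply: (face_point1_dir_eq0 (fun i => y i - polar_vertex u i)).
  move=> j l l_neq; rewrite dotp_onBl (polar_face_point1_perp _ _ _ polar_y xy1 l_neq).
  by rewrite (polar_face_point1_perp _ _ _ (polar_vertex_in u) xw1 l_neq) subrr.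
by rewrite dotpBl xy1 xw1 subrr.
Qed.

End SimpleFacePoint.

Lemma polar_face_of_point x : Q x -> (exists u, fcoord u x = 0) ->
  proper_face polarQ (fun y => polarQ y /\ dotp y (fun i => x i - c i) = 1).
Proof.
move=> Qx [u xu0]; split; last first.
  exists (fun=> 0); split; first exact: polar0.
  by rewrite dotp0l => -[_ /eqP]; rewrite eq_sym oner_eq0.
split; first by exists (polar_vertex u); split; [exact: polar_vertex_in | exact/dotp_polar_vertex_eq1].
exists (fun i => x i - c i), 1; split=> [y polar_y|y]; rewrite dotpC //.
exact: polar_y.
Qed.

Lemma is_vertex_polar v : is_vertex polarQ v <-> exists u, polar_vertex u = v.
Proof.
split=> [v_vertex | [u <-]]; last first.
  split; first by exists (polar_vertex u).
  set x := face_point [set u]; exists (fun i => x i - c i), 1.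
  split=> [y polar_y|y]; first by rewrite dotpC; apply/polar_y/(face_point_in _ (lab_avoid1 u)).
  split=> [->|[polar_y xy1]]; last by apply: (polar_face_point1_eq u) => //; rewrite dotpC.
  split; first exact: polar_vertex_in.
  by rewrite dotpC dotp_polar_vertex_eq1 fcoord_face_point1.
have [e e_gt0 [polar_e polar_Ne]] := polar_axis ord0.
have v_proper : proper_face polarQ (fun y => y = v).
  split=> //; case: (eqVneq (v ord0) e) => [ve|v_neq].
    exists (fun i => if i == ord0 then - e else 0); split=> // /(congr1 (fun y => y ord0)).
    by rewrite ve eqxx; lra.
  exists (fun i => if i == ord0 then e else 0); split=> // ev.
  by move: v_neq; rewrite -ev eqxx eqxx.
have [x Qx F_x] := polar_face_support _ v_proper.
have [polar_v xv1] := (F_x v).1 erefl.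
have [u xu0] := exists_fcoord_eq0 _ _ Qx polar_v xv1.
by exists u; apply/F_x; split; [exact: polar_vertex_in | exact/dotp_polar_vertex_eq1].
Qed.

(* A facet of K(P) misses [p_j] or the element [i] of [P_j] it replaces by [p_j]. *)
Lemma K_face_avoid (s : {set label}) : K_face p s -> forall j, exists l, lab j l \notin s.
Proof.
move=> [_ [y [[y_lab _] s_sub]]] j.
case: (pickP (fun l => lab j l \notin s)) => [l l_notin|all_in]; first by exists l.
have /s_sub [i0 yi0] : inr j \in s by apply/negbFE/(all_in ord0).
have pi0 : p i0 = j by case: (y_lab i0); rewrite yi0 // => -[].
subst j; have /s_sub [i1 yi1] : inl i0 \in s.
  by have := all_in (inord (lab_index (inl i0))); rewrite (lab_indexK (inl i0)) => /negbFE.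
by case: (y_lab i1); rewrite yi1 => -[] // i01; rewrite -i01 yi0 in yi1.
Qed.

Lemma K_face_polar_face (s : {set label}) : K_face p s ->
  exists F, proper_face polarQ F /\ forall u, u \in s <-> F (polar_vertex u).
Proof.
move=> Ks; have s_avoids := K_face_avoid _ Ks.
have [/set0Pn [u u_in] _] := Ks.
set x := face_point s.
have zero_iff u' : fcoord u' x = 0 <-> u' \in s := fcoord_face_point_eq0 s s_avoids u'.
exists (fun y => polarQ y /\ dotp y (fun i => x i - c i) = 1); split.
  by apply: polar_face_of_point; [exact: face_point_in | exists u; apply/zero_iff].
move=> u'; rewrite -zero_iff -dotp_polar_vertex_eq1.
by split=> [|[] //]; split=> //; apply: polar_vertex_in.
Qed.

(* In each simplex pick a vertex with nonzero coordinate; the facet of K(P)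
   using exactly these vertices contains every label where [x] vanishes. *)
Lemma K_face_zero_set x : (exists u, fcoord u x = 0) ->
  K_face p [set u | fcoord u x == 0].
Proof.
move=> [u0 xu0]; split; first by apply/set0Pn; exists u0; rewrite inE xu0.
pose g j := odflt ord0 [pick l | coord j x l != 0].
have g_neq0 j : coord j x (g j) != 0.
  rewrite /g; case: pickP => [l //|all0] /=.
  have := bary_sum1 (V_indep j) x; rewrite big1 => [/eqP|l _].
    by rewrite eq_sym oner_eq0.
  by apply/eqP/negbFE/all0.
exists (fun i => if lab (p i) (g (p i)) == inl i then inr (p i) else inl i).
split; first split.
- by move=> i; case: ifP; [right | left].
- move=> i1 i2; case: ifP => e1; case: ifP => e2 // [] // pi12.
  by move: e1; rewrite pi12 (eqP e2) => /eqP [].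
move=> v; rewrite inE => /eqP; case: v => [i|j] xv0.
  exists i; rewrite ifF //; apply: contraTF (g_neq0 (p i)) => /eqP lab_g.
  by rewrite negbK -fcoord_lab lab_g xv0.
have := lab_block_lab j (g j); case E: (lab j (g j)) => [i0|j'] /= pi0.
  by exists i0; rewrite pi0 E eqxx.
by move: (g_neq0 j); rewrite -fcoord_lab E pi0 xv0 eqxx.
Qed.

Lemma polar_face_K_face (s : {set label}) F : proper_face polarQ F ->
  (forall u, u \in s <-> F (polar_vertex u)) -> K_face p s.
Proof.
move=> F_face s_F; have [x Qx F_x] := polar_face_support F F_face.
have -> : s = [set u | fcoord u x == 0].
  apply/setP => u; rewrite inE; apply/idP/eqP.
    by move=> /s_F /F_x [_ /dotp_polar_vertex_eq1].
  by move=> xu0; apply/s_F/F_x; split; [exact: polar_vertex_in | exact/dotp_polar_vertex_eq1].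
apply: K_face_zero_set.
have [[[y Fy] _] _] := F_face; have [polar_y xy1] := (F_x y).1 Fy.
exact: exists_fcoord_eq0 _ _ Qx polar_y xy1.
Qed.

End ProductOfSimplices.

Theorem theorem2p5 (R : realType) (n t : nat) (p : 'I_n.+1 -> 'I_t)
  (V : forall j : 'I_t, 'I_(#|block p j|).+1 -> 'I_n.+1 -> R)
  (c : 'I_n.+1 -> R) :
  (2 <= n)%N ->
  is_partition p ->
  (forall j, aff_indep (block p j) (V j)) ->
  in_interior (prod_simplices p V) c ->
  iso_boundary_complex (K_face p) (polar (prod_simplices p V) c).
Proof.
move=> _ p_onto V_indep c_interior.
exists (polar_vertex _ _ _ p V c); split; first exact: polar_vertex_inj.
split=> [v | s]; first exact: is_vertex_polar.
split; first exact: K_face_polar_face.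
by move=> [F [F_face s_F]]; apply: polar_face_K_face F_face s_F.
Qed.
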